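(* Let a group $G$ act freely on a topological space $X$ and let $p:X\to X/G$ be the projection onto the orbit space (quotient topology). Suppose $X/G$ has an open cover $\mathcal U$ consisting of connected sets such that for every pair $U,V\in\mathcal U$ the union $U\cup V$ is evenly covered by $p$. Then the action is an overlay action.
   Context: An open set $W\subseteq Y$ is evenly covered by $p:X\to Y$ if $p^{-1}(W)$ is a disjoint union of open sets each mapped homeomorphically onto $W$ by $p$. For a continuous map $p:X\to Y$: a slice of $p$ is an open set $U\subseteq X$ such that $p^{-1}(p(U))$ is the disjoint union of a family of open sets $U_s$ ($s\in S$), each mapped by $p$ homeomorphically onto $p(U)$, with $U=U_t$ for some $t\in S$. A covering structure of $p$ is an open cover $\mathcal S$ of $X$ by slices of $p$ such that for every $U\in\mathcal S$, $p^{-1}(p(U))$ is the disjoint union of a family $\{U_j\}_{j\in J}$ of elements of $\mathcal S$, each mapped homeomorphically onto $p(U)$. For a cover $\mathcal S$ and $x\in X$, $st(x,\mathcal S)=\bigcup\{U\in\mathcal S: x\in U\}$. For a free action of $G$ on $X$: a slice of the action is an open $U\subseteq X$ with $U\cap(g\cdot U)\neq\emptyset\Rightarrow g=1_G$. The action is an overlay action if there is a covering structure $\mathcal U$ of the projection $X\to X/G$ such that $st(x,\mathcal U)$ is a slice of the action for every $x\in X$. *)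

Set Implicit Arguments.
Unset Strict Implicit.

Record topology (T : Type) := Topology {
  open : (T -> Prop) -> Prop;
  open_full : open (fun _ => True);
  open_union : forall (I : Type) (F : I -> T -> Prop),
      (forall i, open (F i)) -> open (fun x => exists i, F i x);
  open_inter : forall A B, open A -> open B -> open (fun x => A x /\ B x)
}.
Arguments open {T} t _.

Record group := Group {
  gcar :> Type;
  gmul : gcar -> gcar -> gcar;
  gone : gcar;
  ginv : gcar -> gcar;
  gmulA : forall a b c, gmul a (gmul b c) = gmul (gmul a b) c;
  gmul1l : forall a, gmul gone a = a;
  gmul1r : forall a, gmul a gone = a;
  gmulVl : forall a, gmul (ginv a) a = gone;
  gmulVr : forall a, gmul a (ginv a) = gone
}.

Section Defs.
Variables (G : group) (X Y : Type) (TX : topology X) (TY : topology Y).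
Variable (act : G -> X -> X).
Variable (p : X -> Y).

(** [act] is a (left) action of [G] on the space [X]: each [act g] is
    continuous (hence a homeomorphism, with inverse [act (ginv g)]). *)
Definition is_action : Prop :=
  (forall x, act (gone G) x = x) /\
  (forall g h x, act (gmul g h) x = act g (act h x)) /\
  (forall g A, open TX A -> open TX (fun x => A (act g x))).

Definition free_action : Prop := forall g x, act g x = x -> g = gone G.

(** [p : X -> Y] is (up to the canonical homeomorphism) the projection onto
    the orbit space X/G equipped with the quotient topology. *)
Definition is_orbit_projection : Prop :=
  (forall y, exists x, p x = y) /\
  (forall x1 x2, p x1 = p x2 <-> exists g, act g x1 = x2) /\
  (forall V, open TY V <-> open TX (fun x => V (p x))).

Definition image (U : X -> Prop) : Y -> Prop := fun y => exists x, U x /\ p x = y.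

(** [p] maps [U] homeomorphically onto [W] (subspace topologies). *)
Definition maps_homeo_onto (U : X -> Prop) (W : Y -> Prop) : Prop :=
  (forall x, U x -> W (p x)) /\
  (forall y, W y -> exists x, U x /\ p x = y) /\
  (forall x1 x2, U x1 -> U x2 -> p x1 = p x2 -> x1 = x2) /\
  (forall B, open TY B -> exists A, open TX A /\ forall x, U x -> (A x <-> B (p x))) /\
  (forall A, open TX A -> exists B, open TY B /\
      forall y, W y -> (B y <-> exists x, U x /\ A x /\ p x = y)).

Definition disjoint_decomp (W : Y -> Prop) (S : Type) (F : S -> X -> Prop) : Prop :=
  (forall s, open TX (F s)) /\
  (forall s t x, F s x -> F t x -> s = t) /\
  (forall x, W (p x) <-> exists s, F s x) /\
  (forall s, maps_homeo_onto (F s) W).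

Definition evenly_covered (W : Y -> Prop) : Prop :=
  open TY W /\ exists (S : Type) (F : S -> X -> Prop), disjoint_decomp W F.

Definition slice_of_map (U : X -> Prop) : Prop :=
  open TX U /\ exists (S : Type) (F : S -> X -> Prop),
    disjoint_decomp (image U) F /\ exists t, forall x, F t x <-> U x.

Definition covering_structure (C : (X -> Prop) -> Prop) : Prop :=
  (forall x, exists U, C U /\ U x) /\
  (forall U, C U -> slice_of_map U) /\
  (forall U, C U -> exists (J : Type) (F : J -> X -> Prop),
      (forall j, C (F j)) /\ disjoint_decomp (image U) F).

Definition star (x : X) (C : (X -> Prop) -> Prop) : X -> Prop :=
  fun z => exists U, C U /\ U x /\ U z.

Definition slice_of_action (U : X -> Prop) : Prop :=
  open TX U /\ forall g, (exists x, U x /\ U (act g x)) -> g = gone G.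

Definition overlay_action : Prop :=
  exists C, covering_structure C /\ forall x, slice_of_action (star x C).

End Defs.

Definition connected (Y : Type) (TY : topology Y) (U : Y -> Prop) : Prop :=
  forall A B, open TY A -> open TY B ->
    (forall y, U y -> A y \/ B y) ->
    (forall y, U y -> A y -> B y -> False) ->
    (forall y, U y -> A y) \/ (forall y, U y -> B y).

(** Take as covering structure the family of all sheets: nonempty open
    sets of [X] mapped homeomorphically by [p] onto a member of the cover.
    A sheet is connected, being homeomorphic to a connected set, so whenever
    it lies over an evenly covered set it is contained in a single sheet of
    the decomposition; over its own base it is in fact equal to one.  This
    yields the covering-structure axioms.  For the star condition: if [z] and
    [g·z] both lie in the star of [x], they lie in sheets [U1], [U2] through
    [x]; decomposing [p⁻¹(p U1 ∪ p U2)], both sheets fall into the one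
    component containing [x], on which [p] is injective, so [g·z = z] and
    freeness gives [g = 1]. *)
From Stdlib Require Import Classical FunctionalExtensionality PropExtensionality.

Set Implicit Arguments.
Unset Strict Implicit.

Lemma pred_ext {T : Type} (A B : T -> Prop) : (forall y, A y <-> B y) -> A = B.
Proof.
  intros H; apply functional_extensionality; intros y; apply propositional_extensionality; auto.
Qed.

Section Decompositions.
Variables (X Y : Type) (TX : topology X) (TY : topology Y) (p : X -> Y).

Lemma homeo_connected (U : X -> Prop) (W : Y -> Prop) :
  maps_homeo_onto TX TY p U W -> connected TY W -> connected TX U.
Proof.
  intros [Hmap [Hsurj [Hinj [_ Himg]]]] HW A B HA HB Hcov Hdisj.
  destruct (Himg A HA) as [A' [HA' EA]]. destruct (Himg B HB) as [B' [HB' EB]].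
  assert (backA : forall x, U x -> A' (p x) -> A x).
  { intros x Ux Hx. apply EA in Hx; [|auto]. destruct Hx as [x' [Ux' [Ax' E]]].
    rewrite <- (Hinj x' x Ux' Ux E). exact Ax'. }
  assert (backB : forall x, U x -> B' (p x) -> B x).
  { intros x Ux Hx. apply EB in Hx; [|auto]. destruct Hx as [x' [Ux' [Bx' E]]].
    rewrite <- (Hinj x' x Ux' Ux E). exact Bx'. }
  destruct (HW A' B' HA' HB') as [L|L].
  - intros y Wy. destruct (Hsurj y Wy) as [x [Ux <-]].
    destruct (Hcov x Ux); [left; apply EA|right; apply EB]; eauto.
  - intros y Wy HAy HBy. destruct (Hsurj y Wy) as [x [Ux <-]]. eauto.
  - left. intros x Ux. apply backA; auto.
  - right. intros x Ux. apply backB; auto.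
Qed.

Lemma connected_in_sheet (W : Y -> Prop) (S : Type) (F : S -> X -> Prop)
    (U : X -> Prop) (s : S) (x0 : X) :
  disjoint_decomp TX TY p W F -> connected TX U ->
  (forall x, U x -> W (p x)) -> U x0 -> F s x0 -> forall x, U x -> F s x.
Proof.
  intros [Fopen [Fdisj [Fcov _]]] HU HUW Ux0 Fx0.
  set (Others := fun x => exists t : {t | t <> s}, F (proj1_sig t) x).
  assert (HOthers : open TX Others) by (apply open_union; intros; apply Fopen).
  destruct (HU (F s) Others (Fopen s) HOthers) as [L|L].
  - intros x Ux. destruct (proj1 (Fcov x) (HUW x Ux)) as [t Ft].
    destruct (classic (t = s)) as [->|n]; [left; auto|right; exists (exist _ t n); auto].
  - intros x _ Fs [[t n] Ft]. apply n. eapply Fdisj; eauto.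
  - exact L.
  - exfalso. destruct (L x0 Ux0) as [[t n] Ft]. apply n. eapply Fdisj; eauto.
Qed.

Lemma connected_is_sheet (W : Y -> Prop) (S : Type) (F : S -> X -> Prop)
    (U : X -> Prop) (x0 : X) :
  disjoint_decomp TX TY p W F -> maps_homeo_onto TX TY p U W ->
  connected TX U -> U x0 -> exists s, forall x, F s x <-> U x.
Proof.
  intros D Hh HU Ux0. pose proof D as [_ [_ [Fcov Fhomeo]]].
  destruct Hh as [Hmap [Hsurj _]].
  destruct (proj1 (Fcov x0) (Hmap x0 Ux0)) as [s Fs].
  assert (UinF : forall x, U x -> F s x) by (eapply connected_in_sheet; eauto).
  exists s. intros x; split; [|apply UinF].
  intros Fx. destruct (Hsurj (p x) (proj2 (Fcov x) (ex_intro _ s Fx))) as [u [Uu Eu]].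
  destruct (Fhomeo s) as [_ [_ [Hinj _]]].
  rewrite <- (Hinj u x (UinF u Uu) Fx Eu). exact Uu.
Qed.

Lemma homeo_image (U : X -> Prop) (W : Y -> Prop) :
  maps_homeo_onto TX TY p U W -> image p U = W.
Proof.
  intros [Hmap [Hsurj _]]. apply pred_ext. intros y; split.
  - intros [x [Ux <-]]. auto.
  - intros Wy. destruct (Hsurj y Wy) as [x [Ux Ex]]. exists x; auto.
Qed.

Lemma evenly_covered_decomp (W : Y -> Prop) :
  evenly_covered TX TY p (fun y => W y \/ W y) ->
  exists (S : Type) (F : S -> X -> Prop), disjoint_decomp TX TY p W F.
Proof.
  intros [_ [S [F D]]].
  assert (E : (fun y => W y \/ W y) = W) by (apply pred_ext; tauto).
  rewrite E in D. eauto.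
Qed.

End Decompositions.

Section Sheets.
Variables (X Y : Type) (TX : topology X) (TY : topology Y) (p : X -> Y).
Variable (Ucov : (Y -> Prop) -> Prop).
Hypothesis Hconn : forall W, Ucov W -> connected TY W.
Hypothesis Hev : forall V W, Ucov V -> Ucov W ->
  evenly_covered TX TY p (fun y => V y \/ W y).

Definition sheet (U : X -> Prop) : Prop :=
  exists W, Ucov W /\ (exists x, U x) /\ open TX U /\ maps_homeo_onto TX TY p U W.

Lemma sheet_open (U : X -> Prop) : sheet U -> open TX U.
Proof. intros [W [_ [_ [HUo _]]]]. exact HUo. Qed.

Lemma sheet_connected (U : X -> Prop) (W : Y -> Prop) :
  Ucov W -> maps_homeo_onto TX TY p U W -> connected TX U.
Proof. intros HW Hh. exact (homeo_connected Hh (Hconn HW)). Qed.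

Lemma decomp_sheet (W : Y -> Prop) (S : Type) (F : S -> X -> Prop) (s : S) (y : Y) :
  Ucov W -> disjoint_decomp TX TY p W F -> W y -> sheet (F s).
Proof.
  intros HW [Fopen [_ [_ Fhomeo]]] Wy. exists W. split; [exact HW|].
  split; [|split; [apply Fopen|apply Fhomeo]].
  destruct (Fhomeo s) as [_ [Hsurj _]]. destruct (Hsurj y Wy) as [x [Fx _]]. eauto.
Qed.

Lemma sheets_cover :
  (forall y, exists W, Ucov W /\ W y) -> forall x, exists U, sheet U /\ U x.
Proof.
  intros Hcov x. destruct (Hcov (p x)) as [W [HW Wx]].
  destruct (evenly_covered_decomp (Hev HW HW)) as [S [F D]].
  pose proof D as [_ [_ [Fcov _]]].
  destruct (proj1 (Fcov x) Wx) as [s Fs].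
  exists (F s). split; [eapply decomp_sheet; eauto|exact Fs].
Qed.

Lemma sheet_decomposes (U : X -> Prop) : sheet U ->
  exists (S : Type) (F : S -> X -> Prop), (forall s, sheet (F s)) /\
    disjoint_decomp TX TY p (image p U) F /\ exists t, forall x, F t x <-> U x.
Proof.
  intros [W [HW [[x0 Ux0] [_ Hh]]]].
  rewrite (homeo_image Hh).
  destruct (evenly_covered_decomp (Hev HW HW)) as [S [F D]].
  exists S, F. split; [|split; [exact D|]].
  - intros s. eapply decomp_sheet; eauto. destruct Hh as [Hmap _]. eauto.
  - eapply connected_is_sheet; eauto. eapply sheet_connected; eauto.
Qed.

Lemma sheets_covering_structure :
  (forall y, exists W, Ucov W /\ W y) -> covering_structure TX TY p sheet.
Proof.
  intros Hcov. split; [|split].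
  - exact (sheets_cover Hcov).
  - intros U HU. split; [exact (sheet_open HU)|].
    destruct (sheet_decomposes HU) as [S [F [_ [D Hslice]]]]. eauto.
  - intros U HU. destruct (sheet_decomposes HU) as [S [F [Fsheets [D _]]]]. eauto.
Qed.

Lemma star_sheets_open (x : X) : open TX (star x sheet).
Proof.
  assert (E : star x sheet = fun z => exists i : {U | sheet U /\ U x}, proj1_sig i z).
  { apply pred_ext. intros z; split.
    - intros [U [HU [Ux Uz]]]. exists (exist _ U (conj HU Ux)). auto.
    - intros [[U [HU Ux]] Uz]. exists U. auto. }
  rewrite E. apply open_union. intros [U [HU Ux]]. exact (sheet_open HU).
Qed.

(** Two sheets through [x] lie in a common sheet of the decomposition of
    [p⁻¹(W1 ∪ W2)], on which [p] is injective; so [p] is injective on the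
    star of [x]. *)
Lemma star_sheets_injective (x z1 z2 : X) :
  star x sheet z1 -> star x sheet z2 -> p z1 = p z2 -> z1 = z2.
Proof.
  intros [U1 [[W1 [HW1 [_ [_ Hh1]]]] [U1x U1z]]]
         [U2 [[W2 [HW2 [_ [_ Hh2]]]] [U2x U2z]]] Ep.
  destruct (Hev HW1 HW2) as [_ [S [F D]]].
  pose proof D as [_ [_ [Fcov Fhomeo]]].
  pose proof Hh1 as [Hmap1 _]. pose proof Hh2 as [Hmap2 _].
  destruct (proj1 (Fcov x) (or_introl (Hmap1 x U1x))) as [s Fs].
  assert (F1 : F s z1).
  { apply (connected_in_sheet (x0 := x) D (sheet_connected HW1 Hh1)); auto. }
  assert (F2 : F s z2).
  { apply (connected_in_sheet (x0 := x) D (sheet_connected HW2 Hh2)); auto. }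
  destruct (Fhomeo s) as [_ [_ [Hinj _]]]. exact (Hinj z1 z2 F1 F2 Ep).
Qed.

End Sheets.

Theorem proposition3p4 (G : group) (X Y : Type) (TX : topology X) (TY : topology Y)
    (act : G -> X -> X) (p : X -> Y)
    (Hact : is_action TX act) (Hfree : free_action act)
    (Hp : is_orbit_projection TX TY act p)
    (Ucov : (Y -> Prop) -> Prop)
    (Hcov : forall y, exists U, Ucov U /\ U y)
    (Hopen : forall U, Ucov U -> open TY U)
    (Hconn : forall U, Ucov U -> connected TY U)
    (Hev : forall U V, Ucov U -> Ucov V ->
        evenly_covered TX TY p (fun y => U y \/ V y)) :
  overlay_action TX TY act p.
Proof.
  destruct Hp as [_ [Horbit _]].
  exists (sheet TX TY p Ucov). split.
  - exact (sheets_covering_structure Hconn Hev Hcov).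
  - intros x. split; [apply star_sheets_open|].
    (* [z] and [g·z] in the star of [x] have the same image, hence coincide. *)
    intros g [z [Hz Hgz]].
    apply Hfree with z. symmetry.
    apply (star_sheets_injective Hconn Hev Hz Hgz).
    apply Horbit. exists g. reflexivity.
Qed.
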